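(* Let $H_1$ and $H_2$ be two contextuality scenarios with $H_1\sim_{vcz}H_2$. Then any choice of $H_1^{vcz}$ and any choice of $H_2^{vcz}$ are observationally equivalent.
   Context: A contextuality scenario is a hypergraph $H=(V,E)$ (with $V$ finite and $E$ a set of subsets of $V$) with no isolated vertex, i.e. $V=\bigcup_{e\in E}e$. A probabilistic model on $H$ is a function $p:V\to[0,1]$ with $\sum_{v\in e}p(v)=1$ for every $e\in E$; the set of such models is $\mathcal{G}(H)$, and for $W\subseteq V$ one writes $p(W)=\sum_{v\in W}p(v)$. For $W\subseteq V$, the induced sub-hypergraph is $H_W=(W,\{e\cap W: e\in E\})$. Two scenarios $H=(V,E)$, $H'=(V',E')$ are observationally equivalent if there is a bijection $\phi:V'\to V$ with $\mathcal{G}(H')=\{p\circ\phi: p\in\mathcal{G}(H)\}$. Virtual equivalence: a set $e\subseteq V$ is a virtual edge of $H$ if $\sum_{v\in e}p(v)=1$ for all $p\in\mathcal{G}(H)$; $H$ is virtually included in any $H'=(V,E\cup E')$ where $E'$ consists only of virtual edges of $H$; virtual equivalence is the symmetric closure of this relation. The completion $\overline{H}$ of $H$ is the virtually equivalent scenario with the most edges (i.e. with all virtual edges added). Equivalence by contraction: a nonempty $W\subseteq V$ can be contracted in $H$ if for every $e\in E$, either $W\subseteq e$ or $W\cap e=\emptyset$. For every nonempty $W'\subseteq W$, the induced sub-hypergraph $H_{V\setminus(W\setminus W')}$ is a contraction of $H$; equivalence by contraction is the symmetric transitive closure of this relation. Zero equivalence: for $W\subseteq V$, $H$ zero-reduces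 to $H_W$ if $p(v)=0$ for all $p\in\mathcal{G}(H)$ and all $v\in V\setminus W$ (the vertices of $V\setminus W$ are then called zero weighted); zero equivalence is the symmetric closure of zero-reduction. VCZ equivalence $\sim_{vcz}$ is the smallest equivalence relation containing virtual equivalence, equivalence by contraction and zero equivalence. For a scenario $H$, a choice of $H^{vcz}=(V^{vcz},E^{vcz})$ is a scenario obtained from $H$ by removing all zero weighted vertices, then contracting the remaining vertices so that $|V^{vcz}|$ is minimal, then taking the completion and removing edges (by virtual equivalence) so that $|E^{vcz}|$ is minimal. *)

From HB Require Import structures.
From Stdlib Require Import Relation_Operators.
From mathcomp Require Import all_boot all_order all_algebra.
From mathcomp Require Import boolp reals.

Set Implicit Arguments.
Unset Strict Implicit.
Unset Printing Implicit Defensive.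

Import Order.TTheory GRing.Theory Num.Theory.
Local Open Scope ring_scope.

Definition scenario := {V : finType & {set {set V}}}.

Definition mkScen (V : finType) (E : {set {set V}}) : scenario :=
  existT (fun V : finType => {set {set V}}) V E.

Definition no_isolated (V : finType) (E : {set {set V}}) : bool :=
  \bigcup_(e in E) e == [set: V].

(* Induced sub-hypergraph H_W = (W, {e cap W : e in E}); W is realised as the
   finite subtype {x | x \in W}. *)
Definition induced (V : finType) (E : {set {set V}}) (W : {set V}) : scenario :=
  @mkScen {x : V | x \in W}
    [set [set x : {x : V | x \in W} | val x \in e] | e : {set V} in E].

Definition contractible (V : finType) (E : {set {set V}}) (W : {set V}) : bool :=
  (W != set0) && [forall e in E, (W \subset e) || [disjoint W & e]].

Section Models.
Variable R : realType.

Definition is_model (V : finType) (E : {set {set V}}) (p : V -> R) : Prop :=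
  (forall v, 0 <= p v <= 1) /\ (forall e, e \in E -> \sum_(v in e) p v = 1).

Definition virtual_edge (V : finType) (E : {set {set V}}) (e : {set V}) : Prop :=
  forall p, is_model E p -> \sum_(v in e) p v = 1.

Definition virt_incl (V : finType) (E F : {set {set V}}) : Prop :=
  exists E' : {set {set V}}, F = E :|: E' /\ (forall e, e \in E' -> virtual_edge E e).

Definition completion (V : finType) (E : {set {set V}}) : {set {set V}} :=
  [set e | `[< virtual_edge E e >]].

Definition zero_weighted (V : finType) (E : {set {set V}}) (v : V) : Prop :=
  forall p, is_model E p -> p v = 0.

Definition obs_equiv (H H' : scenario) : Prop :=
  exists phi : projT1 H' -> projT1 H, bijective phi /\
    forall q : projT1 H' -> R,
      is_model (projT2 H') q <->
      exists p : projT1 H -> R, is_model (projT2 H) p /\ q =1 (p \o phi).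

Inductive contr_step : scenario -> scenario -> Prop :=
| CStep (V : finType) (E : {set {set V}}) (W W' : {set V}) :
    no_isolated E -> contractible E W -> W' \subset W -> W' != set0 ->
    contr_step (mkScen E) (induced E (~: (W :\: W'))).

(* Generating steps of VCZ equivalence.  The relabelling step is derivable in
   the paper's set-based setting; it is needed here because
   induced sub-hypergraphs live on subtypes. *)
Inductive vcz_step : scenario -> scenario -> Prop :=
| VirtStep (V : finType) (E F : {set {set V}}) :
    no_isolated E -> no_isolated F -> virt_incl E F ->
    vcz_step (mkScen E) (mkScen F)
| ContrStep (H H' : scenario) : contr_step H H' -> vcz_step H H'
| ZeroStep (V : finType) (E : {set {set V}}) (W : {set V}) :
    no_isolated E -> (forall v, v \notin W -> zero_weighted E v) ->
    vcz_step (mkScen E) (induced E W)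
| RelabelStep (V V' : finType) (E : {set {set V}}) (f : V' -> V) :
    no_isolated E -> bijective f ->
    vcz_step (mkScen E) (@mkScen V' [set [set x | f x \in e] | e : {set V} in E]).

Definition vcz_equiv : scenario -> scenario -> Prop :=
  clos_refl_sym_trans scenario vcz_step.

Definition contr_reach : scenario -> scenario -> Prop :=
  clos_refl_trans scenario contr_step.

Definition is_vcz_choice (H K : scenario) : Prop :=
  exists Z : {set projT1 H},
    (forall v, v \in Z <-> ~ zero_weighted (projT2 H) v) /\
    exists H1 : scenario,
      contr_reach (induced (projT2 H) Z) H1 /\
      (forall H', contr_reach (induced (projT2 H) Z) H' ->
                  #|projT1 H1| <= #|projT1 H'|)%N /\
      exists EK : {set {set projT1 H1}},
        K = mkScen EK /\ no_isolated EK /\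
        virt_incl EK (completion (projT2 H1)) /\
        (forall EK' : {set {set projT1 H1}},
            no_isolated EK' -> virt_incl EK' (completion (projT2 H1)) ->
            #|EK| <= #|EK'|)%N.

End Models.

From mathcomp Require Import all_boot all_order all_algebra perm.
From mathcomp Require Import boolp reals lra.
From Stdlib Require Import Relation_Operators.

(* Call two vertices twins when they lie in the same edges.  Discarding the
   zero-weighted vertices of H and merging each class of twins yields a
   reduced scenario; its models are the images of the models of H obtained by
   summing the weights over each twin class.  Up to relabelling, this set of
   reduced models is unchanged by each generating step of VCZ equivalence.
   On the other hand a choice of H^{vcz} realises it exactly: after removing
   the zero-weighted vertices, contracting twin pairs one at a time brings the
   number of vertices down to the number of twin classes, and no sequence of
   contractions can go below it, so a contraction of minimal size has exactly
   one vertex per twin class; completing and pruning edges keeps the models. *)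

Set Implicit Arguments.
Unset Strict Implicit.
Unset Printing Implicit Defensive.
Import Order.TTheory GRing.Theory Num.Theory.
Local Open Scope ring_scope.

Section VczInvariant.
Variable R : realType.

Lemma no_isolatedP (V : finType) (E : {set {set V}}) :
  reflect (forall v, exists2 e, e \in E & v \in e) (no_isolated E).
Proof.
apply: (iffP eqP) => [covE v|cover].
- have : v \in \bigcup_(e in E) e by rewrite covE inE.
  by case/bigcupP=> e; exists e.
- apply/setP=> v; rewrite inE; have [e he hv] := cover v.
  by apply/bigcupP; exists e.
Qed.

Lemma ge0_is_model (V : finType) (E : {set {set V}}) (p : V -> R) :
  no_isolated E -> (forall v, 0 <= p v) ->
  (forall e, e \in E -> \sum_(v in e) p v = 1) -> is_model E p.
Proof.
move=> /no_isolatedP noiso p_ge0 p_sum; split=> // v; rewrite p_ge0 /=.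
have [e he hv] := noiso v.
by rewrite -(p_sum e he) (bigD1 v) //= lerDl; apply: sumr_ge0 => u _.
Qed.

Lemma sumr_delta (V : finType) (P : pred V) (w : V) (k : R) :
  \sum_(v | P v) (v == w)%:R * k = (P w)%:R * k.
Proof.
rewrite big_mkcond (bigD1 w) //= eqxx big1 ?addr0.
  by case: (P w); rewrite ?mul1r ?mul0r.
by move=> u /negbTE ->; rewrite mul0r; case: (P u).
Qed.

(* [obs_equiv] for arbitrary sets of weight functions. *)
Definition models_equiv (A B : finType) (MA : (A -> R) -> Prop)
    (MB : (B -> R) -> Prop) : Prop :=
  exists phi : B -> A, bijective phi /\
    forall q, MB q <-> exists p, MA p /\ q =1 p \o phi.

Lemma eq_models_equiv (A : finType) (MA MB : (A -> R) -> Prop) :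
  (forall r, MA r <-> MB r) -> models_equiv MA MB.
Proof.
move=> eqM; exists id; split; first exact: (Bijective (g:=id)).
move=> q; split=> [/eqM MAq|[p [MAp /funext ->]]]; first by exists q.
exact/eqM.
Qed.

Lemma models_equiv_sym (A B : finType) (MA : (A -> R) -> Prop)
    (MB : (B -> R) -> Prop) :
  models_equiv MA MB -> models_equiv MB MA.
Proof.
case=> phi [[psi phiK psiK] eqM]; exists psi; split; first exact: Bijective psiK phiK.
move=> p; split=> [MAp|[q [MBq pE]]].
- exists (p \o phi); split; first by apply/eqM; exists p.
  by move=> a /=; rewrite psiK.
- have [p' [MAp' qE]] := (eqM q).1 MBq.
  suff -> : p = p' by [].
  by apply: funext => a; rewrite pE /= qE /= psiK.
Qed.

Lemma models_equiv_trans (A B C : finType) (MA : (A -> R) -> Prop)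
    (MB : (B -> R) -> Prop) (MC : (C -> R) -> Prop) :
  models_equiv MA MB -> models_equiv MB MC -> models_equiv MA MC.
Proof.
case=> f [bij_f eqAB]; case=> g [bij_g eqBC]; exists (f \o g).
split=> [|s]; first exact: bij_comp.
split=> [/eqBC [q [MBq sE]]|[p [MAp sE]]].
- have [p [MAp qE]] := (eqAB q).1 MBq.
  by exists p; split=> // c; rewrite sE /= qE.
- apply/eqBC; exists (p \o f); split=> //.
  by apply/eqAB; exists p.
Qed.

Definition twins (V : finType) (E : {set {set V}}) (v w : V) : Prop :=
  forall e, e \in E -> (v \in e) = (w \in e).

Lemma twins_sym (V : finType) (E : {set {set V}}) (v w : V) :
  twins E v w -> twins E w v.
Proof. by move=> tw e he; rewrite tw. Qed.

(* A reduction [c] of [E] names the reduced scenario: [c] sends the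
   zero-weighted vertices to [None] and the twin classes of the others onto
   the vertex type [A]. *)
Definition is_reduction (V A : finType) (E : {set {set V}}) (c : V -> option A) :
    Prop :=
  [/\ forall v, c v = None <-> zero_weighted R E v,
      forall v w, c v <> None -> (c w = c v <-> twins E v w)
    & forall a, exists v, c v = Some a].

Definition reduced_model (V A : finType) (E : {set {set V}}) (c : V -> option A)
    (r : A -> R) : Prop :=
  exists2 p, is_model E p & forall a, r a = \sum_(v | c v == Some a) p v.

Definition transfers (V V' A : finType) (E : {set {set V}}) (c : V -> option A)
    (E' : {set {set V'}}) (c' : V' -> option A) : Prop :=
  is_reduction E' c' /\ forall r, reduced_model E' c' r <-> reduced_model E c r.

Lemma transfers_trans (V V' V'' A : finType) (E : {set {set V}})
    (E' : {set {set V'}}) (E'' : {set {set V''}}) (c : V -> option A)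
    (c' : V' -> option A) (c'' : V'' -> option A) :
  transfers E c E' c' -> transfers E' c' E'' c'' -> transfers E c E'' c''.
Proof.
by move=> [_ reduced'] [red'' reduced'']; split=> // r; rewrite reduced'' reduced'.
Qed.

(** * Pulling a scenario back along an injection *)

Definition pullback (V V' : finType) (g : V' -> V) (E : {set {set V}}) :
    {set {set V'}} :=
  [set [set x | g x \in e] | e : {set V} in E].

Section Pullback.
Variables (V V' : finType) (g : V' -> V) (E : {set {set V}}).
Hypothesis g_inj : injective g.

Lemma sum_pullback (h : V -> R) (P : pred V) :
  (forall v, (forall x, g x != v) -> h v = 0) ->
  \sum_(x | P (g x)) h (g x) = \sum_(v | P v) h v.
Proof.
move=> h0; rewrite (partition_big g P) //=; apply: eq_bigr => v Pv.
case: (pickP (fun x => g x == v)) => [x /eqP gx|no_x].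
- rewrite (big_pred1 x) ?gx // => y /=.
  apply/andP/eqP => [[_ /eqP]|->]; first by rewrite -gx => /g_inj.
  by rewrite gx Pv eqxx.
- by rewrite big_pred0 ?h0 // => y; rewrite no_x ?andbF.
Qed.

Definition zext (q : V' -> R) (v : V) : R :=
  if [pick x | g x == v] is Some x then q x else 0.

Lemma zextE q x : zext q (g x) = q x.
Proof.
by rewrite /zext; case: pickP => [y /eqP/g_inj -> //|/(_ x)]; rewrite eqxx.
Qed.

Lemma zext_out q v : (forall x, g x != v) -> zext q v = 0.
Proof.
by move=> no_x; rewrite /zext; case: pickP => [y|//]; rewrite (negbTE (no_x y)).
Qed.

Lemma pullback_modelP (q : V' -> R) :
  is_model (pullback g E) q <->
  (forall x, 0 <= q x <= 1) /\ (forall e, e \in E -> \sum_(x | g x \in e) q x = 1).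
Proof.
split=> -[q_bd q_sum]; split=> // e.
- move=> he; rewrite -(q_sum [set x | g x \in e]); last exact: imset_f.
  by apply: eq_bigl => x; rewrite inE.
- case/imsetP=> e0 he0 ->; rewrite -(q_sum e0 he0).
  by apply: eq_bigl => x; rewrite inE.
Qed.

Lemma zext_model q : is_model (pullback g E) q -> is_model E (zext q).
Proof.
case/pullback_modelP=> q_bd q_sum; split=> [v|e he].
- by rewrite /zext; case: pickP => [x _|_]; rewrite ?lexx ?ler01.
- rewrite -(q_sum e he) -(@sum_pullback _ (mem e)); last exact: zext_out.
  by apply: eq_bigr => x _; rewrite zextE.
Qed.

Lemma pullback_twins x y : twins (pullback g E) x y <-> twins E (g x) (g y).
Proof.
split=> tw e he.
- by have := tw [set x | g x \in e]; rewrite !inE; apply; apply: imset_f.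
- by case/imsetP: he => e0 he0 ->; rewrite !inE; apply: tw.
Qed.

Lemma pullback_no_isolated : no_isolated E -> no_isolated (pullback g E).
Proof.
move=> /no_isolatedP noiso; apply/no_isolatedP => x.
have [e he hx] := noiso (g x); exists [set x | g x \in e]; last by rewrite inE.
exact: imset_f.
Qed.

(* Extension by zero maps models of the pullback to models of [E]; conversely,
   the dominating restriction [q] of a model [p] shows that pulling back
   creates no new zero-weighted vertex. *)
Lemma transfers_pullback (A : finType) (c : V -> option A) :
  is_reduction E c ->
  (forall a, exists x, c (g x) = Some a) ->
  (forall p : V -> R, is_model E p -> exists q : V' -> R, [/\ is_model (pullback g E) q,
     forall x, p (g x) <= q x &
     forall a, \sum_(x | c (g x) == Some a) q x = \sum_(v | c v == Some a) p v]) ->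
  transfers E c (pullback g E) (c \o g).
Proof.
move=> [c_None c_twins _] onto restrict.
have zero_pullback x : zero_weighted R (pullback g E) x <-> zero_weighted R E (g x).
  split=> zx p Mp; last by rewrite -(zextE p) zx //; apply: zext_model.
  have [q [Mq le_pq _]] := restrict p Mp.
  have := le_pq x; rewrite (zx q Mq) => le_p0.
  by apply/eqP; rewrite eq_le le_p0; case/andP: (Mp.1 (g x)).
split; first split=> // [x|x y /= cx].
- by rewrite zero_pullback; apply: c_None.
- by rewrite pullback_twins; apply: c_twins.
move=> r; split=> -[p Mp rE].
- exists (zext p); first exact: zext_model.
  move=> a; rewrite rE -(@sum_pullback _ (fun v => c v == Some a)).
    by apply: eq_bigr => x _; rewrite zextE.
  exact: zext_out.
- have [q [Mq _ q_sum]] := restrict p Mp.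
  by exists q => // a; rewrite rE q_sum.
Qed.

End Pullback.

Lemma notin_val_image (V : finType) (W : {set V}) (v : V) :
  (forall x : {x | x \in W}, val x != v) -> v \notin W.
Proof. by move=> no_x; apply/negP => vW; have := no_x (Sub v vW); rewrite eqxx. Qed.

Lemma transfers_pullback_support (V V' A : finType) (E : {set {set V}})
    (g : V' -> V) (c : V -> option A) :
  injective g -> (forall v, (forall x, g x != v) -> zero_weighted R E v) ->
  is_reduction E c -> transfers E c (pullback g E) (c \o g).
Proof.
move=> g_inj g_supp red; apply: transfers_pullback => // [a|p Mp].
- have [c_None _ onto] := red; have [v cv] := onto a.
  case: (pickP (fun x => g x == v)) => [x /eqP gx|no_x].
    by exists x; rewrite /= gx.
  by move: cv; rewrite (c_None v).2 // => ?; apply: g_supp => x; rewrite no_x.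
- have p_out v : (forall x, g x != v) -> p v = 0 by move=> /g_supp; apply.
  exists (p \o g); split=> // [|a].
    apply/pullback_modelP; split=> [x|e he]; first exact: Mp.1.
    by rewrite (@sum_pullback _ _ _ g_inj p (mem e)) // Mp.2.
  exact: (@sum_pullback _ _ _ g_inj p (fun v => c v == Some a)).
Qed.

(** * Twins *)

Lemma twins_model_tperm (V : finType) (E : {set {set V}}) (p : V -> R) v w :
  twins E v w -> is_model E p -> is_model E (p \o tperm v w).
Proof.
move=> tw [p_bd p_sum]; split=> [u|e he]; first exact: p_bd.
rewrite -(p_sum e he) [RHS](reindex_inj (@perm_inj _ (tperm v w))).
by apply: eq_bigl => u; case: tpermP => // ->; rewrite (tw e he).
Qed.

Lemma twins_zero (V : finType) (E : {set {set V}}) v w :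
  twins E v w -> zero_weighted R E w -> zero_weighted R E v.
Proof.
by move=> tw zw p Mp; have := zw _ (twins_model_tperm tw Mp); rewrite /= tpermR.
Qed.

Definition move_mass (V : finType) (p : V -> R) (v w u : V) : R :=
  p u + (u == w)%:R * p v - (u == v)%:R * p v.

Lemma sum_move_mass (V : finType) (p : V -> R) v w (P : pred V) :
  \sum_(u | P u) move_mass p v w u =
  \sum_(u | P u) p u + (P w)%:R * p v - (P v)%:R * p v.
Proof. by rewrite sumrB big_split /= !sumr_delta. Qed.

Lemma move_mass_model (V : finType) (E : {set {set V}}) (p : V -> R) v w :
  no_isolated E -> twins E v w -> is_model E p -> is_model E (move_mass p v w).
Proof.
move=> noiso tw [p_bd p_sum].
have p_ge0 u : 0 <= p u by case/andP: (p_bd u).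
apply: ge0_is_model => // [u|e he].
- rewrite /move_mass; case: (eqVneq u v) => [->|_].
    by rewrite mul1r addrAC subrr add0r mulr_ge0.
  by rewrite mul0r subr0 addr_ge0 ?mulr_ge0.
- by rewrite sum_move_mass -(tw e he) addrK p_sum.
Qed.

(* Moving the weight of [v] to its twin [w] gives a model, so an edge holding
   exactly one of them would force the weight of [v] to vanish. *)
Lemma twins_virtual_edge (V : finType) (E : {set {set V}}) (e : {set V}) v w :
  no_isolated E -> twins E v w -> ~ zero_weighted R E v -> virtual_edge R E e ->
  (v \in e) = (w \in e).
Proof.
move=> noiso tw nz_v ve; apply: contra_notP nz_v => ne p Mp.
have := ve _ (move_mass_model noiso tw Mp); rewrite sum_move_mass ve //.
by move: ne; case: (v \in e); case: (w \in e) => // _ /=;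
  rewrite ?mul1r ?mul0r => ?; lra.
Qed.

Lemma reduction_twins (V A : finType) (E : {set {set V}}) (c : V -> option A) v w :
  is_reduction E c -> twins E v w -> c v = c w.
Proof.
move=> [c_None c_twins _] tw; have [cv_None|cv_Some] := eqVneq (c v) None.
  by rewrite cv_None; apply/esym/c_None/(twins_zero (twins_sym tw))/c_None.
by apply/esym/(c_twins _ _ (elimN eqP cv_Some)).
Qed.

(** * Reductions exist and are unique *)

Definition signature (V : finType) (E : {set {set V}}) (v : V) : {set {set V}} :=
  [set e in E | v \in e].

Lemma twins_signature (V : finType) (E : {set {set V}}) v w :
  twins E v w <-> signature E v = signature E w.
Proof.
split=> [tw|sig_vw e he].
- apply/setP=> e; rewrite !inE.
  by case: (boolP (e \in E)) => // he; rewrite (tw e he).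
- by move/setP: sig_vw => /(_ e); rewrite !inE he.
Qed.

(* The twin class of a non-zero-weighted vertex is named by its signature. *)
Lemma exists_reduction (V : finType) (E : {set {set V}}) :
  exists (A : finType) (c : V -> option A), is_reduction E c.
Proof.
pose Z := [set v | `[< ~ zero_weighted R E v >]].
have ZP v : v \in Z <-> ~ zero_weighted R E v by rewrite inE; split=> /asboolP.
exists {S : {set {set V}} | S \in signature E @: Z}, (fun v => insub (signature E v)).
split=> [v|v w|a].
- case: insubP => [a /imsetP [u /ZP nz_u sig_vu] _|no_sig]; split=> // zv.
    by case: nz_u; apply: (twins_zero _ zv); apply/twins_signature/esym.
  by apply: contrapT => /ZP vZ; move/negP: no_sig; apply; apply: imset_f.
- case: insubP => [a _ val_a _|//]; rewrite twins_signature -val_a.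
  split=> [cw|<-]; last exact: valK.
  by move: cw; case: insubP => // b _ val_b [<-].
- have /imsetP [v _ val_a] := valP a.
  by exists v; rewrite -val_a valK.
Qed.

Lemma reduction_factor (V A1 A2 : finType) (E : {set {set V}})
    (c1 : V -> option A1) (c2 : V -> option A2) :
  is_reduction E c1 -> is_reduction E c2 ->
  exists phi : A2 -> A1, forall v, c1 v = omap phi (c2 v).
Proof.
move=> [zero1 twins1 _] [zero2 twins2 onto2].
have class_image a2 : exists a1, exists2 v, c2 v = Some a2 & c1 v = Some a1.
  have [v c2v] := onto2 a2; case c1v: (c1 v) => [a1|]; first by exists a1, v.
  by move/zero1/zero2: c1v; rewrite c2v.
have [phi phiP] := choice class_image; exists phi => v.
case c2v: (c2 v) => [a2|] /=; last exact/zero1/zero2.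
have [v0 c2v0 c1v0] := phiP a2.
have tw : twins E v0 v by apply/(twins2 v0 v); rewrite c2v0 // c2v.
by rewrite -c1v0; apply/(twins1 v0 v) => //; rewrite c1v0.
Qed.

Lemma reduction_unique (V A1 A2 : finType) (E : {set {set V}})
    (c1 : V -> option A1) (c2 : V -> option A2) :
  is_reduction E c1 -> is_reduction E c2 ->
  models_equiv (reduced_model E c1) (reduced_model E c2).
Proof.
move=> red1 red2.
have [phi c1E] := reduction_factor red1 red2.
have [psi c2E] := reduction_factor red2 red1.
have phiK : cancel psi phi.
  move=> a1; have [_ _ onto1] := red1; have [v c1v] := onto1 a1.
  by move: (c1E v); rewrite c2E c1v => -[<-].
have psiK : cancel phi psi.
  move=> a2; have [_ _ onto2] := red2; have [v c2v] := onto2 a2.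
  by move: (c2E v); rewrite c1E c2v => -[<-].
have classE a2 v : (c1 v == Some (phi a2)) = (c2 v == Some a2).
  by rewrite c1E; case: (c2 v) => [a|] //; apply/eqP/eqP => [[/(can_inj psiK) ->]|[->]].
exists phi; split=> [|r2]; first exact: Bijective psiK phiK.
split=> [[p Mp r2E]|[r1 [[p Mp r1E] r2E]]].
- exists (fun a1 => \sum_(v | c1 v == Some a1) p v); split; first by exists p.
  by move=> a2; rewrite r2E /=; apply: eq_bigl => v; rewrite classE.
- by exists p => // a2; rewrite r2E /= r1E; apply: eq_bigl => v; rewrite classE.
Qed.

(** * Invariance under the generating steps *)

Lemma virt_incl_models (V : finType) (E F : {set {set V}}) (p : V -> R) :
  virt_incl R E F -> is_model E p <-> is_model F p.
Proof.
case=> E' [-> virt]; split=> -[p_bd p_sum]; split=> // e he.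
- by case/setUP: he => [/p_sum|/virt]; last apply.
- by apply: p_sum; rewrite inE he.
Qed.

Lemma transfers_virt_incl (V A : finType) (E F : {set {set V}}) (c : V -> option A) :
  no_isolated E -> virt_incl R E F -> is_reduction E c -> transfers E c F c.
Proof.
move=> noiso EF [c_None c_twins onto].
have zeroE v : zero_weighted R F v <-> zero_weighted R E v.
  by split=> zv p Mp; apply: zv; apply/(virt_incl_models p EF).
split=> [|r]; last first.
  by split=> -[p Mp rE]; exists p => //; apply/(virt_incl_models p EF).
split=> // [v|v w cv]; first by rewrite zeroE.
rewrite c_twins //; split=> tw e he; last first.
  by apply: tw; case: EF => E' [-> _]; rewrite inE he.
case: EF he => E' [-> virt] /setUP [/tw //|/virt ve].
by apply: twins_virtual_edge noiso tw _ ve => /c_None /cv.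
Qed.

Definition collapse (V : finType) (p : V -> R) (D : {set V}) (w v : V) : R :=
  (if v \in D then 0 else p v) + (v == w)%:R * \sum_(u in D) p u.

Lemma sum_collapse (V : finType) (p : V -> R) (D : {set V}) (w : V) (P : pred V) :
  {in D, forall v, P v = P w} ->
  \sum_(v | P v) collapse p D w v = \sum_(v | P v) p v.
Proof.
move=> PD; rewrite big_split /= sumr_delta [RHS](bigID (mem D)) /=.
rewrite [X in X + _](bigID (mem D)) /= big1 ?add0r => [|v /andP [_ ->] //].
rewrite addrC; congr (_ + _); last by apply: eq_bigr => v /andP [_ /negbTE ->].
case: (boolP (P w)) => Pw; rewrite ?mul1r ?mul0r.
- by apply: eq_bigl => v; case: (boolP (v \in D)) => vD; rewrite ?andbF ?andbT ?PD.
- rewrite big_pred0 // => v.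
  by case: (boolP (v \in D)) => vD; rewrite ?andbF ?PD // (negbTE Pw).
Qed.

Lemma contractible_twins (V : finType) (E : {set {set V}}) (W : {set V}) v w :
  contractible E W -> v \in W -> w \in W -> twins E v w.
Proof.
case/andP=> _ /forall_inP W_edge vW wW e /W_edge /orP [/subsetP W_e|W_e].
  by rewrite !W_e.
by rewrite (disjointFr W_e vW) (disjointFr W_e wW).
Qed.

(* Deleting [W :\: W'] and adding its weight onto a vertex [w] of [W']
   restricts the models; the edges and the twin classes cannot tell apart the
   vertices of [W]. *)
Lemma transfers_contraction (V A : finType) (E : {set {set V}}) (W W' : {set V})
    (c : V -> option A) :
  no_isolated E -> contractible E W -> W' \subset W -> W' != set0 ->
  is_reduction E c ->
  transfers E c (pullback (fun x : {x | x \in ~: (W :\: W')} => val x) E) (c \o val).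
Proof.
move=> noiso ctr sub_W' /set0Pn [w wW'] red.
set D := W :\: W'.
have wD : w \in ~: D by rewrite !inE wW'.
have twins_D v : v \in D -> twins E v w.
  by case/setDP=> vW _; apply: contractible_twins ctr vW (subsetP sub_W' w wW').
have val_inj_D : injective (fun x : {x | x \in ~: D} => val x) := val_inj.
apply: transfers_pullback => // [a|p Mp].
- have [_ _ onto] := red; have [v cv] := onto a.
  have [vD|vD] := boolP (v \in D).
    by exists (Sub w wD); rewrite /= -(reduction_twins red (twins_D v vD)).
  have vD' : v \in ~: D by rewrite inE.
  by exists (Sub v vD').
have [p_bd p_sum] := Mp.
have p_ge0 u : 0 <= p u by case/andP: (p_bd u).
have q_ge0 v : 0 <= collapse p D w v.
  by rewrite addr_ge0 ?mulr_ge0 ?sumr_ge0 //; case: ifP.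
have q_out v : (forall x : {x | x \in ~: D}, val x != v) -> collapse p D w v = 0.
  move/notin_val_image; rewrite inE negbK => vD.
  rewrite /collapse vD add0r; case: eqP => [vw|_]; last by rewrite mul0r.
  by move: wD; rewrite -vw inE vD.
exists (collapse p D w \o val); split=> [|x|a].
- apply: ge0_is_model => [|x|_ /imsetP [e he ->]]; first exact: pullback_no_isolated.
    exact: q_ge0.
  rewrite (eq_bigl (fun x => val x \in e)) => [|x]; last by rewrite inE.
  rewrite (@sum_pullback _ _ _ val_inj_D _ (mem e)) // sum_collapse ?p_sum //.
  by move=> v /twins_D; apply.
- have := valP x; rewrite inE /collapse /= => /negbTE ->.
  by rewrite lerDl mulr_ge0 ?sumr_ge0.
- rewrite (@sum_pullback _ _ _ val_inj_D _ (fun v => c v == Some a)) // sum_collapse //.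
  by move=> v /twins_D /(reduction_twins red) ->.
Qed.

Lemma transfers_contr_step (S T : scenario) (A : finType) (c : projT1 S -> option A) :
  contr_step S T -> is_reduction (projT2 S) c ->
  exists g : projT1 T -> projT1 S, transfers (projT2 S) c (projT2 T) (c \o g).
Proof.
move=> step; case: step c => V E W W' noiso ctr sub_W' W'_neq0 c red.
by exists val; apply: transfers_contraction.
Qed.

Lemma transfers_vcz_step (S T : scenario) (A : finType) (c : projT1 S -> option A) :
  vcz_step R S T -> is_reduction (projT2 S) c ->
  exists c' : projT1 T -> option A, transfers (projT2 S) c (projT2 T) c'.
Proof.
move=> step; case: step c
  => [V E F noiso _ EF|S' T' step|V E W _ W_supp|V V' E f _ bij_f] c red.
- by exists c; apply: transfers_virt_incl.
- by have [g tr] := transfers_contr_step step red; exists (c \o g).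
- exists (c \o val); apply: transfers_pullback_support val_inj _ red.
  by move=> v /notin_val_image /W_supp.
- exists (c \o f); apply: transfers_pullback_support (bij_inj bij_f) _ red.
  by have [f' _ f'K] := bij_f; move=> v /(_ (f' v)); rewrite f'K eqxx.
Qed.

Lemma vcz_equiv_reduced_models (S T : scenario) (A B : finType)
    (c : projT1 S -> option A) (d : projT1 T -> option B) :
  vcz_equiv R S T -> is_reduction (projT2 S) c -> is_reduction (projT2 T) d ->
  models_equiv (reduced_model (projT2 S) c) (reduced_model (projT2 T) d).
Proof.
move=> ST; elim: ST A B c d => {S T} [S T step|S|S T _ IH|S U T _ IH1 _ IH2]
  A B c d redS redT.
- have [c' [redT' reduced']] := transfers_vcz_step step redS.
  apply: models_equiv_trans (reduction_unique redT' redT).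
  by apply: eq_models_equiv => r; apply: iff_sym.
- exact: reduction_unique.
- exact: models_equiv_sym (IH _ _ _ _ redT redS).
- have [C [e redU]] := exists_reduction (projT2 U).
  exact: models_equiv_trans (IH1 _ _ _ _ redS redU) (IH2 _ _ _ _ redU redT).
Qed.

(** * Choices of H^{vcz} *)

Lemma transfers_contr_reach (S T : scenario) (A : finType) (c : projT1 S -> option A) :
  contr_reach S T -> is_reduction (projT2 S) c ->
  exists g : projT1 T -> projT1 S, transfers (projT2 S) c (projT2 T) (c \o g).
Proof.
move=> ST; elim: ST A c => {S T} [S T step|S|S U T _ IH1 _ IH2] A c red.
- exact: transfers_contr_step.
- by exists id; split.
- have [g1 tr1] := IH1 A c red; have [g2 tr2] := IH2 A _ tr1.1.
  by exists (g1 \o g2); apply: transfers_trans tr1 tr2.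
Qed.

Lemma contr_step_twins (V : finType) (E : {set {set V}}) v w :
  no_isolated E -> twins E v w -> v != w ->
  contr_step (mkScen E) (induced E [set~ w]).
Proof.
move=> noiso tw vw.
have -> : [set w] = [set v; w] :\: [set v].
  apply/setP=> u; rewrite !inE; case: (eqVneq u w) => [->|_].
    by rewrite orbT andbT eq_sym.
  by rewrite orbF andNb.
apply: CStep => //.
- apply/andP; split; first by apply/set0Pn; exists v; rewrite set21.
  apply/forall_inP => e he; case: (boolP (v \in e)) => ve.
    by rewrite subUset !sub1set ve -(tw e he) ve.
  by apply/orP; right; rewrite disjoints_subset subUset !sub1set !inE -(tw e he) ve.
- by rewrite sub1set set21.
- by apply/set0Pn; exists v; rewrite set11.
Qed.

Lemma exists_small_contraction (V A : finType) (E : {set {set V}}) (c : V -> option A) :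
  no_isolated E -> is_reduction E c -> (forall v, c v <> None) ->
  exists2 T, contr_reach (mkScen E) T & (#|projT1 T| <= #|A|)%N.
Proof.
have [n] := ubnP #|V|; elim: n V E c => // n IH V E c /ltnSE le_V_n noiso red c_Some.
case: (pickP [pred vw : V * V | (c vw.1 == c vw.2) && (vw.1 != vw.2)]).
- case=> v w /andP [/eqP cvw vw].
  have [_ c_twins _] := red.
  have tw : twins E v w by apply/(c_twins v w (c_Some v)).
  have step := contr_step_twins noiso tw vw.
  have [g [red' _]] := transfers_contr_step step red.
  have lt_n : (#|projT1 (induced E [set~ w])| < n)%N.
    rewrite /= card_sig (eq_card (B := [set~ w])) // cardsC1.
    apply: leq_trans le_V_n; rewrite ltn_predL; apply/card_gt0P; by exists v.
  have [T reach card_T] :=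
    IH _ _ _ lt_n (pullback_no_isolated _ noiso) red' (fun x => c_Some (g x)).
  by exists T => //; exact: (rt_trans _ _ _ _ _ (rt_step _ _ _ _ step) reach).
- move=> no_pair; exists (mkScen E); first exact: rt_refl.
  have c_inj : injective c.
    move=> x y cxy; apply/eqP; apply: contraFT (no_pair (x, y)) => /= ->.
    by rewrite cxy eqxx.
  have card_V : #|V| = #|c @: [set: V]| by rewrite card_imset ?cardsT.
  have card_A : #|A| = #|Some @: [set: A]|.
    by rewrite card_imset ?cardsT //; apply: Some_inj.
  rewrite /= card_V card_A; apply: subset_leq_card; apply/subsetP => _ /imsetP [x _ ->].
  by case cx: (c x) => [a|]; [apply: imset_f | have := c_Some x].
Qed.

Lemma total_reduction_models (V A : finType) (E : {set {set V}}) (c : V -> option A) :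
  is_reduction E c -> (#|V| <= #|A|)%N ->
  models_equiv (is_model E) (reduced_model E c).
Proof.
move=> [_ _ onto] le_VA.
have [g gP] := choice onto.
have g_inj : injective g by move=> a b gab; have := gP a; rewrite gab gP => -[].
have [g' gK g'K] := inj_card_bij g_inj le_VA.
have classE a v : (c v == Some a) = (v == g a).
  apply/eqP/eqP => [cv|->]; last exact: gP.
  by move: cv; rewrite -(g'K v) gP => -[<-]; rewrite g'K.
exists g; split=> [|r]; first exact: Bijective gK g'K.
split=> [[p Mp rE]|[p [Mp rE]]].
- exists p; split=> // a; rewrite rE /=.
  by apply: big_pred1 => v; rewrite /= classE.
- exists p => // a; rewrite rE /=.
  by rewrite (big_pred1 (g a)) // => v; rewrite /= classE.
Qed.

Lemma completion_models (V : finType) (E EK : {set {set V}}) (p : V -> R) :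
  virt_incl R EK (completion R E) -> is_model EK p <-> is_model E p.
Proof.
move=> EK_compl; rewrite (virt_incl_models p EK_compl).
split=> -[p_bd p_sum]; split=> // e he.
- by apply: p_sum; rewrite inE; apply/asboolP => q [_]; apply.
- by move: he; rewrite inE => /asboolP; apply.
Qed.

Lemma vcz_choice_models (S K : scenario) (A : finType) (c : projT1 S -> option A) :
  no_isolated (projT2 S) -> is_vcz_choice R S K -> is_reduction (projT2 S) c ->
  models_equiv (is_model (projT2 K)) (reduced_model (projT2 S) c).
Proof.
move=> noiso [Z [Z_nz [H [reach [H_min [EK [-> [_ [EK_compl _]]]]]]]]] red.
have Z_supp v : (forall x : {x | x \in Z}, val x != v) -> zero_weighted R (projT2 S) v.
  by move=> /notin_val_image vZ; apply: contrapT => /Z_nz; apply/negP.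
have red0 : transfers (projT2 S) c (projT2 (induced (projT2 S) Z)) (c \o val).
  exact: transfers_pullback_support val_inj Z_supp red.
have c_Some (x : {x | x \in Z}) : c (val x) <> None.
  by have [c_None _ _] := red; move/c_None; apply/Z_nz; apply: valP.
have [g red1] := transfers_contr_reach reach red0.1.
have [T reach_T card_T] :=
  exists_small_contraction (pullback_no_isolated _ noiso) red0.1 c_Some.
(* [H] has at most one vertex per twin class, hence exactly one. *)
have card_H := leq_trans (H_min _ reach_T) card_T.
apply: models_equiv_trans (eq_models_equiv (fun p => completion_models p EK_compl)) _.
apply: models_equiv_trans (total_reduction_models red1.1 card_H) _.
by apply: eq_models_equiv => r; rewrite red1.2 red0.2.
Qed.

End VczInvariant.

Theorem theorem2p1 (R : realType) (H1 H2 : scenario) :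
  no_isolated (projT2 H1) -> no_isolated (projT2 H2) ->
  vcz_equiv R H1 H2 ->
  forall K1 K2 : scenario,
    is_vcz_choice R H1 K1 -> is_vcz_choice R H2 K2 ->
    obs_equiv R K1 K2.
Proof.
move=> noiso1 noiso2 equiv12 K1 K2 choice1 choice2.
have [A [c red1]] := exists_reduction R (projT2 H1).
have [B [d red2]] := exists_reduction R (projT2 H2).
apply: models_equiv_trans (vcz_choice_models noiso1 choice1 red1) _.
apply: models_equiv_trans (vcz_equiv_reduced_models equiv12 red1 red2) _.
exact: models_equiv_sym (vcz_choice_models noiso2 choice2 red2).
Qed.
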